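(* Let $d\ge2$, $n\in\mathbb N$, and let $T\subset[0,1)^d$ be a finite set such that $2\pi T:=\{2\pi\mathbf x:\mathbf x\in T\}$ provides universal discretization in $L_\infty$ for the collection $\mathcal C(n,d)$ with constant $C_1(d)>0$, i.e. $C_1(d)\|f\|_\infty\le\max_{\xi\in2\pi T}|f(\xi)|$ for every $f\in\mathcal T(R(\mathbf s))$ and every $\mathbf s\in\mathbb Z_+^d$ with $\|\mathbf s\|_1=n$. Then there exists a constant $C(d)>0$, depending only on $d$ and $C_1(d)$ (not on $n$ or $T$), such that $\mathrm{disp}(T)\le C(d)2^{-n}$.
   Context: $\mathbb T^d:=[0,2\pi)^d$; $\|f\|_\infty:=\sup_{\mathbf x}|f(\mathbf x)|$. For $\mathbf x<\mathbf y$ in $[0,1)^d$ (coordinatewise), $[\mathbf x,\mathbf y):=[x_1,y_1)\times\cdots\times[x_d,y_d)$, and $\mathcal B$ is the set of all such boxes. The dispersion of a finite $T\subset[0,1)^d$ is $\mathrm{disp}(T):=\sup\{\mathrm{vol}(B):B\in\mathcal B,\ B\cap T=\emptyset\}$. For finite $Q\subset\mathbb Z^d$, $\mathcal T(Q)$ is the space of trigonometric polynomials $\sum_{\mathbf k\in Q}c_{\mathbf k}e^{i(\mathbf k,\mathbf x)}$. For $\mathbf s\in\mathbb Z_+^d$, $R(\mathbf s):=\{\mathbf k\in\mathbb Z^d:|k_j|<2^{s_j}\ \forall j\}$ and $\mathcal C(n,d):=\{\mathcal T(R(\mathbf s)):\|\mathbf s\|_1=n\}$. *)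

From Stdlib Require Import Reals List ZArith Lra.
Import ListNotations.
Open Scope R_scope.

(* Points of R^d are functions nat -> R; only coordinates 0..d-1 matter.
   Frequencies k in Z^d are functions nat -> Z. *)

Definition sumd (d : nat) (g : nat -> R) : R :=
  fold_right Rplus 0 (map g (seq 0 d)).
Definition prodd (d : nat) (g : nat -> R) : R :=
  fold_right Rmult 1 (map g (seq 0 d)).

Definition dotk (d : nat) (k : nat -> Z) (x : nat -> R) : R :=
  sumd d (fun j => IZR (k j) * x j).

(* A trigonometric polynomial sum_k c_k e^{i(k,x)} is given by a finite list
   of terms (k, (Re c_k, Im c_k)). *)
Definition trig_poly := list ((nat -> Z) * (R * R)).

Definition tp_re (d : nat) (f : trig_poly) (x : nat -> R) : R :=
  fold_right Rplus 0
    (map (fun t => let '(k, (a, b)) := t in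
                   a * cos (dotk d k x) - b * sin (dotk d k x)) f).
Definition tp_im (d : nat) (f : trig_poly) (x : nat -> R) : R :=
  fold_right Rplus 0
    (map (fun t => let '(k, (a, b)) := t in
                   a * sin (dotk d k x) + b * cos (dotk d k x)) f).

Definition tp_abs (d : nat) (f : trig_poly) (x : nat -> R) : R :=
  sqrt (tp_re d f x ^ 2 + tp_im d f x ^ 2).

Definition in_Rs (d : nat) (s : nat -> nat) (k : nat -> Z) : Prop :=
  forall j, (j < d)%nat -> (Z.abs (k j) < 2 ^ Z.of_nat (s j))%Z.

Definition in_TRs (d : nat) (s : nat -> nat) (f : trig_poly) : Prop :=
  Forall (fun t => in_Rs d s (fst t)) f.

Definition l1 (d : nat) (s : nat -> nat) : nat :=
  fold_right Nat.add 0%nat (map s (seq 0 d)).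

Definition in_torus (d : nat) (x : nat -> R) : Prop :=
  forall j, (j < d)%nat -> 0 <= x j < 2 * PI.

Definition sup_norm (d : nat) (f : trig_poly) : R -> Prop :=
  is_lub (fun r => exists x, in_torus d x /\ r = tp_abs d f x).

Definition max_on (d : nat) (f : trig_poly) (T : list (nat -> R)) : R :=
  fold_right Rmax 0 (map (fun t => tp_abs d f (fun j => 2 * PI * t j)) T).

Definition in_unit_cube (d : nat) (x : nat -> R) : Prop :=
  forall j, (j < d)%nat -> 0 <= x j < 1.

Definition is_box (d : nat) (x y : nat -> R) : Prop :=
  in_unit_cube d x /\ in_unit_cube d y /\ forall j, (j < d)%nat -> x j < y j.

Definition in_box (d : nat) (x y t : nat -> R) : Prop :=
  forall j, (j < d)%nat -> x j <= t j < y j.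

Definition vol (d : nat) (x y : nat -> R) : R := prodd d (fun j => y j - x j).

Definition disp (d : nat) (T : list (nat -> R)) : R -> Prop :=
  is_lub (fun v => exists x y, is_box d x y /\
            (forall t, In t T -> ~ in_box d x y t) /\ v = vol d x y).

Definition univ_disc (d n : nat) (T : list (nat -> R)) (C1 : R) : Prop :=
  forall (s : nat -> nat) (f : trig_poly), l1 d s = n -> in_TRs d s f ->
    forall nf, sup_norm d f nf -> C1 * nf <= max_on d f T.

From Stdlib Require Import Reals List ZArith Lra Lia Classical ClassicalEpsilon.
From Coquelicot Require Import Coquelicot.
Import ListNotations.
Open Scope R_scope.

(* Suppose a box [x, y) missing T has volume above (4K)^d 2^-n.  Pick dyadic scales s with
   ||s||_1 = n and 2^(s_j) (y_j - x_j) >= 2K, and take the tensor product f of the Dirichlet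
   kernels D_(2^(s_j)) centred at 2 pi times the centre of the box.  Then ||f||_inf =
   prod_j 2^(s_j) is attained at the centre, while each point of T leaves the box in some
   coordinate j, where |D_(2^(s_j))| <= 1 / |sin| <= 4 / (y_j - x_j), at most 2/K times the
   peak of that factor.  For K = 4/C1 + 1 this contradicts C1 ||f||_inf <= max_(2 pi T) |f|. *)

Definition expi (t : R) : C := (cos t, sin t).

Lemma expi_0 : expi 0 = 1%C.
Proof. unfold expi; rewrite cos_0, sin_0; reflexivity. Qed.

Lemma expi_add a b : expi (a + b) = (expi a * expi b)%C.
Proof. unfold expi, Cmult; simpl; rewrite cos_plus, sin_plus; f_equal; ring. Qed.

Lemma Cmod_expi a : Cmod (expi a) = 1.
Proof.
  unfold Cmod, expi; simpl.
  replace (cos a * (cos a * 1) + sin a * (sin a * 1)) with (Rsqr (sin a) + Rsqr (cos a))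
    by (unfold Rsqr; ring).
  rewrite sin2_cos2; apply sqrt_1.
Qed.

Lemma Cmod_expi_sub1 t : Cmod (expi t - 1)%C = 2 * Rabs (sin (t / 2)).
Proof.
  replace (expi t - 1)%C with ((cos t - 1, sin t) : C)
    by (unfold expi; apply injective_projections; simpl; ring).
  assert (Ec : cos t = 1 - 2 * sin (t / 2) * sin (t / 2))
    by (rewrite <- cos_2a_sin; f_equal; field).
  assert (Es : sin t = 2 * sin (t / 2) * cos (t / 2)) by (rewrite <- sin_2a; f_equal; field).
  pose proof (sin2_cos2 (t / 2)) as E; unfold Rsqr in E.
  unfold Cmod; simpl; rewrite Ec, Es.
  match goal with |- sqrt ?e = _ =>
    replace e with (Rsqr (2 * sin (t / 2))) by (unfold Rsqr; nra) end.
  rewrite sqrt_Rsqr_abs, Rabs_mult, (Rabs_right 2) by lra; reflexivity.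
Qed.

Definition csum {A} (F : A -> C) (l : list A) : C := fold_right Cplus 0%C (map F l).
Definition cprod {A} (F : A -> C) (l : list A) : C := fold_right Cmult 1%C (map F l).
Definition rprod (F : nat -> R) (l : list nat) : R := fold_right Rmult 1 (map F l).

Lemma csum_scal_l {A} (c : C) (F : A -> C) l :
  csum (fun x => c * F x)%C l = (c * csum F l)%C.
Proof. induction l as [|a l IH]; unfold csum in *; simpl; [ring|rewrite IH; ring]. Qed.

Lemma csum_app {A} (F : A -> C) l1 l2 : csum F (l1 ++ l2) = (csum F l1 + csum F l2)%C.
Proof. induction l1 as [|a l IH]; unfold csum in *; simpl; [ring|rewrite IH; ring]. Qed.

Lemma csum_flat_map {A B} (F : B -> C) (g : A -> list B) l :
  csum F (flat_map g l) = csum (fun x => csum F (g x)) l.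
Proof. induction l as [|a l IH]; simpl; [reflexivity|rewrite csum_app, IH; reflexivity]. Qed.

Lemma csum_map {A B} (F : B -> C) (g : A -> B) l :
  csum F (map g l) = csum (fun x => F (g x)) l.
Proof. unfold csum; rewrite map_map; reflexivity. Qed.

Lemma csum_ext {A} (F G : A -> C) l : (forall x, F x = G x) -> csum F l = csum G l.
Proof. intros H; unfold csum; f_equal; apply map_ext, H. Qed.

Lemma Cmod_cprod {A} (F : A -> C) l :
  Cmod (cprod F l) = fold_right Rmult 1 (map (fun x => Cmod (F x)) l).
Proof.
  induction l as [|a l IH]; unfold cprod in *; simpl; [apply Cmod_1|].
  rewrite Cmod_mult, IH; reflexivity.
Qed.

Definition dirichlet (M : nat) (t : R) : C := csum (fun a => expi (INR a * t)) (seq 0 M).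

Lemma dirichlet_S M t : dirichlet (S M) t = (1 + expi t * dirichlet M t)%C.
Proof.
  unfold dirichlet; simpl; rewrite <- seq_shift.
  change (csum ?F (0%nat :: ?l)) with (F 0%nat + csum F l)%C.
  rewrite csum_map, <- csum_scal_l; f_equal.
  - rewrite Rmult_0_l; apply expi_0.
  - apply csum_ext; intros a; rewrite <- expi_add, S_INR; f_equal; ring.
Qed.

Lemma dirichlet_0 M : dirichlet M 0 = RtoC (INR M).
Proof.
  induction M as [|M IH]; [reflexivity|].
  rewrite dirichlet_S, IH, expi_0, S_INR.
  apply injective_projections; simpl; ring.
Qed.

Lemma Cmod_dirichlet_0 M : Cmod (dirichlet M 0) = INR M.
Proof. rewrite dirichlet_0, Cmod_R; apply Rabs_right, Rle_ge, pos_INR. Qed.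

Lemma Cmod_dirichlet_le M t : Cmod (dirichlet M t) <= INR M.
Proof.
  induction M as [|M IH].
  - unfold dirichlet, csum; simpl; rewrite Cmod_0; lra.
  - rewrite dirichlet_S, S_INR.
    eapply Rle_trans; [apply Cmod_triangle|].
    rewrite Cmod_1, Cmod_mult, Cmod_expi; lra.
Qed.

Lemma dirichlet_mul_expi_sub1 M t :
  (dirichlet M t * (expi t - 1))%C = (expi (INR M * t) - 1)%C.
Proof.
  induction M as [|M IH].
  - rewrite Rmult_0_l, expi_0; unfold dirichlet, csum; simpl; ring.
  - rewrite dirichlet_S, S_INR.
    replace ((INR M + 1) * t) with (t + INR M * t) by ring.
    rewrite expi_add.
    transitivity (expi t - 1 + expi t * (dirichlet M t * (expi t - 1)))%C; [ring|].
    rewrite IH; ring.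
Qed.

Lemma Cmod_dirichlet_le_inv_sin M t :
  sin (t / 2) <> 0 -> Cmod (dirichlet M t) <= / Rabs (sin (t / 2)).
Proof.
  intros Hs; pose proof (Rabs_pos_lt _ Hs) as Hp.
  pose proof (f_equal Cmod (dirichlet_mul_expi_sub1 M t)) as E.
  rewrite Cmod_mult, Cmod_expi_sub1 in E.
  assert (Cmod (expi (INR M * t) - 1) <= 2).
  { eapply Rle_trans; [apply Cmod_triangle|]; rewrite Cmod_expi, Cmod_opp, Cmod_1; lra. }
  apply (Rmult_le_reg_r (2 * Rabs (sin (t / 2)))); [lra|].
  rewrite E; field_simplify; lra.
Qed.

(* [SIN] provides the Taylor lower bound [a - a^3/6 + a^5/120 - a^7/5040 <= sin a]. *)
Lemma sin_ge_div3 a : 0 <= a <= 2 -> a / 3 <= sin a.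
Proof.
  intros Ha; pose proof PI_4; pose proof PI2_1.
  destruct (SIN a) as [Hlb _]; try lra.
  replace (sin_lb a) with (a - a ^ 3 / 6 + a ^ 5 / 120 - a ^ 7 / 5040) in Hlb
    by (unfold sin_lb, sin_approx, sin_term; simpl; field).
  assert (0 <= a ^ 5) by (apply pow_le; lra).
  assert (a ^ 5 * a ^ 2 <= a ^ 5 * 42) by (apply Rmult_le_compat_l; nra).
  assert (a * a ^ 2 <= a * 4) by (apply Rmult_le_compat_l; nra).
  replace (a ^ 7) with (a ^ 5 * a ^ 2) in Hlb by ring.
  replace (a ^ 3) with (a * a ^ 2) in Hlb by ring.
  lra.
Qed.

Lemma sin_PI_mul_ge v : 0 <= v <= 1 / 2 -> v / 2 <= sin (PI * v).
Proof.
  intros Hv; pose proof PI_4; pose proof PI2_1.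
  assert (PI * v / 3 <= sin (PI * v)) by (apply sin_ge_div3; nra).
  nra.
Qed.

Lemma Rabs_sin_PI_mul_ge h u :
  0 <= h -> h <= Rabs u <= 1 - h -> h / 2 <= Rabs (sin (PI * u)).
Proof.
  intros Hh Hu.
  assert (Hsym : forall v, h <= v <= 1 - h -> h / 2 <= sin (PI * v)).
  { intros v Hv; destruct (Rle_lt_dec v (1 / 2)).
    - pose proof (sin_PI_mul_ge v); lra.
    - replace (PI * v) with (PI - PI * (1 - v)) by ring; rewrite sin_PI_x.
      pose proof (sin_PI_mul_ge (1 - v)); lra. }
  destruct (Rle_lt_dec 0 u).
  - rewrite Rabs_right in Hu by lra; pose proof (Hsym u Hu).
    rewrite Rabs_right; lra.
  - rewrite Rabs_left in Hu by lra; pose proof (Hsym (- u) Hu).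
    replace (PI * u) with (- (PI * - u)) by ring; rewrite sin_neg, Rabs_Ropp, Rabs_right; lra.
Qed.

Lemma Cmod_dirichlet_off_peak M h u :
  0 < h -> h <= Rabs u <= 1 - h -> Cmod (dirichlet M (2 * PI * u)) <= 2 / h.
Proof.
  intros Hh Hu; pose proof (Rabs_sin_PI_mul_ge h u (Rlt_le _ _ Hh) Hu) as Hs.
  replace (PI * u) with (2 * PI * u / 2) in Hs by field.
  eapply Rle_trans; [apply Cmod_dirichlet_le_inv_sin|].
  - intros E; rewrite E, Rabs_R0 in Hs; lra.
  - apply (Rmult_le_reg_r (Rabs (sin (2 * PI * u / 2)) * h)); [nra|].
    field_simplify; lra.
Qed.

Lemma rprod_nonneg a l : (forall i, In i l -> 0 <= a i) -> 0 <= rprod a l.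
Proof.
  induction l as [|i l IH]; intros H; unfold rprod in *; simpl; [lra|].
  apply Rmult_le_pos; [apply H; left; reflexivity|].
  apply IH; intros; apply H; right; assumption.
Qed.

Lemma rprod_pos a l : (forall i, In i l -> 0 < a i) -> 0 < rprod a l.
Proof.
  induction l as [|i l IH]; intros H; unfold rprod in *; simpl; [lra|].
  apply Rmult_lt_0_compat; [apply H; left; reflexivity|].
  apply IH; intros; apply H; right; assumption.
Qed.

Lemma rprod_le a b l : (forall i, In i l -> 0 <= a i <= b i) -> rprod a l <= rprod b l.
Proof.
  induction l as [|i l IH]; intros H; [unfold rprod; simpl; lra|].
  assert (H0 : 0 <= rprod a l) by (apply rprod_nonneg; intros; apply H; right; assumption).
  assert (H1 : rprod a l <= rprod b l) by (apply IH; intros; apply H; right; assumption).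
  destruct (H i) as [H2 H3]; [left; reflexivity|].
  unfold rprod in *; simpl; apply Rmult_le_compat; assumption.
Qed.

Lemma rprod_le_scale_one a b l j e :
  In j l -> (forall i, In i l -> 0 <= a i <= b i) -> a j <= e * b j ->
  rprod a l <= e * rprod b l.
Proof.
  induction l as [|i l IH]; intros Hj H He; [contradiction|].
  assert (H0 : 0 <= rprod a l) by (apply rprod_nonneg; intros; apply H; right; assumption).
  assert (H1 : rprod a l <= rprod b l) by (apply rprod_le; intros; apply H; right; assumption).
  destruct (H i) as [H2 H3]; [left; reflexivity|].
  unfold rprod in *; simpl; destruct Hj as [<-|Hj].
  - rewrite <- Rmult_assoc; apply Rmult_le_compat; lra.
  - assert (fold_right Rmult 1 (map a l) <= e * fold_right Rmult 1 (map b l))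
      by (apply IH; auto; intros; apply H; right; assumption).
    replace (e * (b i * fold_right Rmult 1 (map b l)))
      with (b i * (e * fold_right Rmult 1 (map b l))) by ring.
    apply Rmult_le_compat; lra.
Qed.

Lemma rprod_mult a b l : rprod (fun i => a i * b i) l = rprod a l * rprod b l.
Proof. induction l as [|i l IH]; unfold rprod in *; simpl; [ring|rewrite IH; ring]. Qed.

Lemma rprod_const c l : rprod (fun _ => c) l = c ^ length l.
Proof. induction l as [|i l IH]; unfold rprod in *; simpl; [ring|rewrite IH; ring]. Qed.

Lemma rprod_pow2 r l : rprod (fun i => 2 ^ r i) l = 2 ^ fold_right Nat.add 0%nat (map r l).
Proof. induction l as [|i l IH]; unfold rprod in *; simpl; [ring|rewrite IH, pow_add; ring]. Qed.

Lemma pow2_round_up x : 1 / 2 <= x -> exists r : nat, x <= 2 ^ r <= 2 * x.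
Proof.
  intros Hx.
  destruct (Pow_x_infinity 2) with (b := x) as [N HN]; [rewrite Rabs_right; lra|].
  specialize (HN N (le_n N)); rewrite Rabs_right in HN by (apply Rle_ge, pow_le; lra).
  induction N as [|N IH]; [exists 0%nat; simpl in *; lra|].
  destruct (Rle_lt_dec x (2 ^ N)) as [Hle|Hlt]; [apply IH; lra|].
  exists (S N); simpl in *; lra.
Qed.

Lemma l1_pad d r n : (0 < d)%nat -> (l1 d r <= n)%nat ->
  exists s, l1 d s = n /\ forall j, (r j <= s j)%nat.
Proof.
  intros Hd Hr; destruct d as [|d]; [lia|].
  exists (fun j => if Nat.eqb j 0 then (r 0 + (n - l1 (S d) r))%nat else r j); split.
  - assert (E : map (fun j => if Nat.eqb j 0 then (r 0 + (n - l1 (S d) r))%nat else r j)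
                  (seq 1 d) = map r (seq 1 d)).
    { apply map_ext_in; intros j Hj; apply in_seq in Hj.
      destruct (Nat.eqb_spec j 0); [lia|reflexivity]. }
    unfold l1 in *; simpl in *; rewrite E; lia.
  - intros j; destruct (Nat.eqb_spec j 0); subst; lia.
Qed.

(* Rounding [2K / w_j] up to a power of two loses at most a factor 2 per coordinate,
   which is what makes the constant [(4K)^d] independent of [n]. *)
Lemma dyadic_scales d n K (w : nat -> R) :
  (0 < d)%nat -> 0 < K -> (forall j, (j < d)%nat -> 0 < w j <= 4 * K) ->
  (4 * K) ^ d * (/ 2) ^ n < prodd d w ->
  exists s, l1 d s = n /\ forall j, (j < d)%nat -> 2 * K <= INR (2 ^ s j) * w j.
Proof.
  intros Hd HK Hw Hvol.
  destruct (choice (fun j r => (j < d)%nat -> 2 * K / w j <= 2 ^ r <= 4 * K / w j))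
    as [r Hr].
  { intros j; destruct (lt_dec j d) as [Hj|Hj]; [|exists 0%nat; lia].
    destruct (Hw j Hj) as [Hw0 Hw1].
    destruct (pow2_round_up (2 * K / w j)) as [r Hr].
    - apply (Rmult_le_reg_r (w j)); [lra|]; field_simplify; lra.
    - exists r; intros _; replace (4 * K / w j) with (2 * (2 * K / w j)) by (field; lra).
      exact Hr. }
  assert (Hprod : 2 ^ l1 d r * prodd d w <= (4 * K) ^ d).
  { unfold l1, prodd; fold (rprod w (seq 0 d)).
    rewrite <- rprod_pow2, <- rprod_mult; rewrite <- (length_seq d 0) at 2; rewrite <- rprod_const.
    apply rprod_le; intros j Hj; apply in_seq in Hj.
    destruct (Hw j ltac:(lia)) as [Hw0 Hw1]; destruct (Hr j ltac:(lia)) as [Hr0 Hr1].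
    split; [apply Rmult_le_pos; [apply pow_le|]; lra|].
    apply (Rmult_le_reg_r (/ w j)); [apply Rinv_0_lt_compat; lra|].
    replace (2 ^ r j * w j * / w j) with (2 ^ r j) by (field; lra).
    unfold Rdiv in Hr1; lra. }
  assert (Hsum : (l1 d r <= n)%nat).
  { destruct (Nat.le_gt_cases (l1 d r) n) as [|Hgt]; [assumption|exfalso].
    assert (2 ^ n <= 2 ^ l1 d r) by (apply Rle_pow; lia || lra).
    assert (Hn : (/ 2) ^ n * 2 ^ n = 1)
      by (rewrite <- Rpow_mult_distr, Rinv_l, pow1; lra).
    assert (0 <= prodd d w) by (apply rprod_nonneg; intros j Hj; apply in_seq in Hj;
                                destruct (Hw j ltac:(lia)); lra).
    assert (0 < (/ 2) ^ n) by (apply pow_lt; lra).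
    assert (2 ^ n * prodd d w <= (4 * K) ^ d)
      by (eapply Rle_trans; [apply Rmult_le_compat_r|]; eassumption).
    nra. }
  destruct (l1_pad d r n Hd Hsum) as [s [Hs Hrs]].
  exists s; split; [exact Hs|].
  intros j Hj; destruct (Hr j Hj) as [Hr0 _]; destruct (Hw j Hj) as [Hw0 _].
  rewrite pow_INR; replace (INR 2) with 2 by (simpl; lra).
  apply Rle_trans with (2 ^ r j * w j).
  - apply (Rmult_le_reg_r (/ w j)); [apply Rinv_0_lt_compat; lra|].
    replace (2 ^ r j * w j * / w j) with (2 ^ r j) by (field; lra).
    unfold Rdiv in Hr0; lra.
  - apply Rmult_le_compat_r; [lra|apply Rle_pow; [lra|apply Hrs]].
Qed.

Definition set_coord (k : nat -> Z) (j : nat) (v : Z) : nat -> Z :=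
  fun i => if Nat.eqb i j then v else k i.

Fixpoint dyadic_corner (s : nat -> nat) (l : list nat) : list (nat -> Z) :=
  match l with
  | [] => [fun _ => 0%Z]
  | j :: l' => flat_map (fun k => map (fun a => set_coord k j (Z.of_nat a)) (seq 0 (2 ^ s j)))
                        (dyadic_corner s l')
  end.

Definition dotl (l : list nat) (k : nat -> Z) (y : nat -> R) : R :=
  fold_right Rplus 0 (map (fun j => IZR (k j) * y j) l).

Lemma dotl_set_coord_notin l k j v y : ~ In j l -> dotl l (set_coord k j v) y = dotl l k y.
Proof.
  induction l as [|i l IH]; intros Hj; [reflexivity|].
  simpl in Hj; unfold dotl in *; simpl; rewrite IH by tauto; unfold set_coord.
  destruct (Nat.eqb_spec i j); [subst; tauto|reflexivity].
Qed.

Lemma dotl_sub l k x c : dotl l k x - dotl l k c = dotl l k (fun j => x j - c j).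
Proof. induction l as [|i l IH]; unfold dotl in *; simpl; [ring|rewrite <- IH; ring]. Qed.

Lemma dyadic_corner_range s l k :
  In k (dyadic_corner s l) -> forall j, In j l -> (0 <= k j < 2 ^ Z.of_nat (s j))%Z.
Proof.
  revert k; induction l as [|i l IH]; simpl; intros k Hk j Hj; [contradiction|].
  apply in_flat_map in Hk; destruct Hk as [k0 [Hk0 Hk]].
  apply in_map_iff in Hk; destruct Hk as [a [<- Ha]]; apply in_seq in Ha; unfold set_coord.
  destruct (Nat.eqb_spec j i).
  - subst; change 2%Z with (Z.of_nat 2); rewrite <- Nat2Z.inj_pow; lia.
  - destruct Hj; [congruence|auto].
Qed.

Lemma csum_expi_dyadic_corner s l y : NoDup l ->
  csum (fun k => expi (dotl l k y)) (dyadic_corner s l)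
  = cprod (fun j => dirichlet (2 ^ s j) (y j)) l.
Proof.
  induction l as [|i l IH]; intros Hl.
  - unfold csum, cprod, dotl; simpl; rewrite expi_0; ring.
  - inversion Hl as [|? ? Hi Hl']; subst.
    unfold cprod in *; simpl; rewrite <- IH by assumption.
    rewrite csum_flat_map, <- csum_scal_l; apply csum_ext; intros k.
    rewrite csum_map; unfold dirichlet; rewrite Cmult_comm, <- csum_scal_l.
    apply csum_ext; intros a.
    unfold dotl at 1; simpl; fold (dotl l (set_coord k i (Z.of_nat a)) y).
    rewrite dotl_set_coord_notin by assumption; unfold set_coord at 1; rewrite Nat.eqb_refl.
    rewrite <- INR_IZR_INZ, expi_add; ring.
Qed.

(* Coefficients [e^{-i(k,c)}], so that [f(x) = prod_j D_(2^(s_j))(x_j - c_j)]. *)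
Definition dirichlet_poly (d : nat) (s : nat -> nat) (c : nat -> R) : trig_poly :=
  map (fun k => (k, (cos (dotk d k c), - sin (dotk d k c)))) (dyadic_corner s (seq 0 d)).

Lemma in_TRs_dirichlet_poly d s c : in_TRs d s (dirichlet_poly d s c).
Proof.
  apply Forall_forall; intros t Ht; apply in_map_iff in Ht; destruct Ht as [k [<- Hk]].
  intros j Hj; assert (Hj' : In j (seq 0 d)) by (apply in_seq; lia).
  pose proof (dyadic_corner_range s _ k Hk j Hj'); simpl; lia.
Qed.

Lemma tp_re_im_csum d f x : (tp_re d f x, tp_im d f x) =
  csum (fun t => ((fst (snd t), snd (snd t)) : C) * expi (dotk d (fst t) x))%C f.
Proof.
  induction f as [|[k [a b]] f IH]; [reflexivity|].
  unfold csum in *; simpl; rewrite <- IH; unfold tp_re, tp_im; simpl.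
  apply injective_projections; simpl; ring.
Qed.

Lemma tp_abs_dirichlet_poly d s c x :
  tp_abs d (dirichlet_poly d s c) x
  = rprod (fun j => Cmod (dirichlet (2 ^ s j) (x j - c j))) (seq 0 d).
Proof.
  change (tp_abs d (dirichlet_poly d s c) x)
    with (Cmod (tp_re d (dirichlet_poly d s c) x, tp_im d (dirichlet_poly d s c) x)).
  rewrite tp_re_im_csum; unfold rprod; rewrite <- Cmod_cprod.
  rewrite <- csum_expi_dyadic_corner by apply seq_NoDup.
  unfold dirichlet_poly; rewrite csum_map; f_equal; apply csum_ext; intros k; simpl.
  rewrite <- dotl_sub; unfold Rminus; rewrite expi_add, Cmult_comm; f_equal.
  unfold expi; rewrite cos_neg, sin_neg; reflexivity.
Qed.

Lemma sup_norm_dirichlet_poly d s c : in_torus d c ->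
  sup_norm d (dirichlet_poly d s c) (rprod (fun j => INR (2 ^ s j)) (seq 0 d)).
Proof.
  intros Hc; split.
  - intros v [x [_ ->]]; rewrite tp_abs_dirichlet_poly.
    apply rprod_le; intros j _; split; [apply Cmod_ge_0|apply Cmod_dirichlet_le].
  - intros b Hb; apply Hb; exists c; split; [assumption|].
    rewrite tp_abs_dirichlet_poly; unfold rprod; f_equal; apply map_ext; intros j.
    rewrite Rminus_diag, Cmod_dirichlet_0; reflexivity.
Qed.

Lemma tp_abs_dirichlet_poly_outside_box d s K x y t :
  0 < K -> is_box d x y -> in_unit_cube d t -> ~ in_box d x y t ->
  (forall j, (j < d)%nat -> 2 * K <= INR (2 ^ s j) * (y j - x j)) ->
  tp_abs d (dirichlet_poly d s (fun j => 2 * PI * ((x j + y j) / 2))) (fun j => 2 * PI * t j)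
  <= 2 / K * rprod (fun j => INR (2 ^ s j)) (seq 0 d).
Proof.
  intros HK [Hx [Hy Hxy]] Ht Hout Hs.
  apply not_all_ex_not in Hout; destruct Hout as [j Hj]; apply imply_to_and in Hj.
  destruct Hj as [Hjd Hj].
  specialize (Hx j Hjd); specialize (Hy j Hjd); specialize (Hxy j Hjd).
  specialize (Ht j Hjd); specialize (Hs j Hjd).
  set (h := (y j - x j) / 2); set (u := t j - (x j + y j) / 2).
  assert (Hu : h <= Rabs u <= 1 - h).
  { unfold u, h, Rabs; destruct (Rcase_abs _); split; try lra;
      destruct (Rle_lt_dec (x j) (t j)); try lra; assert (y j <= t j) by lra; lra. }
  rewrite tp_abs_dirichlet_poly.
  apply rprod_le_scale_one with j; [apply in_seq; lia| |].
  { intros i _; split; [apply Cmod_ge_0|apply Cmod_dirichlet_le]. }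
  replace (2 * PI * t j - 2 * PI * ((x j + y j) / 2)) with (2 * PI * u) by (unfold u; ring).
  eapply Rle_trans; [apply (Cmod_dirichlet_off_peak _ h u); [unfold h; lra|exact Hu]|].
  assert (Hh : 0 < h) by (unfold h; lra).
  apply (Rmult_le_reg_r (K * h)); [apply Rmult_lt_0_compat; lra|].
  replace (2 / h * (K * h)) with (2 * K) by (field; lra).
  replace (2 / K * INR (2 ^ s j) * (K * h)) with (INR (2 ^ s j) * (y j - x j))
    by (unfold h; field; lra).
  exact Hs.
Qed.

Lemma max_on_le d f T B : 0 <= B ->
  (forall t, In t T -> tp_abs d f (fun j => 2 * PI * t j) <= B) -> max_on d f T <= B.
Proof.
  intros HB; unfold max_on; induction T as [|t T IH]; intros H; simpl; [assumption|].
  apply Rmax_lub; [apply H; left; reflexivity|apply IH; intros; apply H; right; assumption].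
Qed.

Theorem theorem2p2 :
  forall (d : nat), (2 <= d)%nat ->
  forall (C1 : R), 0 < C1 ->
  exists C : R, 0 < C /\
    forall (n : nat) (T : list (nat -> R)),
      (forall t, In t T -> in_unit_cube d t) ->
      univ_disc d n T C1 ->
      forall D, disp d T D -> D <= C * (/ 2) ^ n.
Proof.
  intros d Hd C1 HC1.
  set (K := 4 / C1 + 1).
  assert (HK : 1 < K) by (unfold K; assert (0 < 4 / C1) by (apply Rdiv_lt_0_compat; lra); lra).
  assert (HKC : 2 / K < C1).
  { apply (Rmult_lt_reg_r K); [lra|]; unfold K; field_simplify; lra. }
  exists ((4 * K) ^ d); split; [apply pow_lt; lra|].
  intros n T HT Hdisc D HD; apply (proj2 HD).
  intros v [x [y [Hbox [Hempty ->]]]]; apply Rnot_lt_le; intros Hvol.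
  pose proof Hbox as [Hx [Hy Hxy]].
  destruct (dyadic_scales d n K (fun j => y j - x j)) as [s [Hn Hs]]; [lia|lra| |exact Hvol|].
  { intros j Hj; specialize (Hx j Hj); specialize (Hy j Hj); specialize (Hxy j Hj); lra. }
  set (c := fun j => 2 * PI * ((x j + y j) / 2)).
  set (M := rprod (fun j => INR (2 ^ s j)) (seq 0 d)).
  assert (HM : 0 < M).
  { apply rprod_pos; intros j _; apply lt_0_INR, Nat.neq_0_lt_0, Nat.pow_nonzero; lia. }
  assert (Hc : in_torus d c).
  { intros j Hj; specialize (Hx j Hj); specialize (Hy j Hj); pose proof PI_RGT_0; unfold c; nra. }
  pose proof (Hdisc s _ Hn (in_TRs_dirichlet_poly d s c) M (sup_norm_dirichlet_poly d s c Hc)).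
  assert (max_on d (dirichlet_poly d s c) T <= 2 / K * M).
  { apply max_on_le; [apply Rmult_le_pos; [apply Rlt_le, Rdiv_lt_0_compat|]; lra|].
    intros t Ht; apply tp_abs_dirichlet_poly_outside_box; auto; lra. }
  nra.
Qed.
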